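(* Let $n\ge3$, $0<\ell\le m$, and let $J$ be a real symmetric diagonally balanced $n\times n$ matrix with $\ell\le J_{ij}\le m$ for all $i\ne j$. For $1\le i\le n$ let $J_{(i)}$ be the lower-right $(n-i+1)\times(n-i+1)$ principal submatrix of $J$ (rows and columns $i,\dots,n$), with eigenvalues $\lambda_1\le\dots\le\lambda_{n-i+1}$. Then $$(n-2)\ell\le\lambda_j\le(n-2)m\ \ (1\le j\le n-i),\qquad (2n-i-1)\ell\le\lambda_{n-i+1}\le(2n-i-1)m.$$ If $J$ is only assumed diagonally dominant (with $\ell\le J_{ij}\le m$ for $i\ne j$), the lower bounds still hold.
   Context: For a real $n\times n$ matrix $J$, $\Delta_i(J)=|J_{ii}|-\sum_{j\ne i}|J_{ij}|$; $J$ is diagonally dominant if $\Delta_i(J)\ge0$ for all $i$ and diagonally balanced if $\Delta_i(J)=0$ for all $i$.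
   Formalization: The diagonal entries $J_{ii}$ of J are also assumed nonnegative, in both the diagonally balanced and the diagonally dominant case. The statement above fails without it. *)

From HB Require Import structures.
From mathcomp Require Import all_boot all_order all_algebra.
Set Implicit Arguments. Unset Strict Implicit. Unset Printing Implicit Defensive.
Import Order.TTheory GRing.Theory Num.Theory.
Local Open Scope ring_scope.

Definition Delta (R : numDomainType) (n : nat) (J : 'M[R]_n) (i : 'I_n) : R :=
  `|J i i| - \sum_(j < n | j != i) `|J i j|.

Definition diag_dominant (R : numDomainType) (n : nat) (J : 'M[R]_n) : Prop :=
  forall i, 0 <= Delta J i.

Definition diag_balanced (R : numDomainType) (n : nat) (J : 'M[R]_n) : Prop :=
  forall i, Delta J i = 0.

Definition shift_ord (n k : nat) (a : 'I_(n - k)) : 'I_n :=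
  @Ordinal n (k + a) (ltac:(by rewrite -ltn_subRL)).

(* lower-right principal submatrix obtained by deleting the first k rows
   and columns; J_(i) (1-based i, rows/cols i..n) is lr_sub i.-1 J *)
Definition lr_sub (R : Type) (n k : nat) (J : 'M[R]_n) : 'M[R]_(n - k) :=
  \matrix_(a, b) J (shift_ord a) (shift_ord b).

Definition sorted_eigenvalues (R : realFieldType) (p : nat) (A : 'M[R]_p)
  (s : seq R) : Prop :=
  sorted <=%R s /\ char_poly A = \prod_(x <- s) ('X - x%:P).

From HB Require Import structures.
From mathcomp Require Import all_boot all_order all_algebra.
From mathcomp Require Import sesquilinear spectral complex ring lra zify.
Import Order.TTheory GRing.Theory Num.Theory.
Set Implicit Arguments. Unset Strict Implicit. Unset Printing Implicit Defensive.
Local Open Scope ring_scope.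
Local Open Scope sesquilinear_scope.

(* Let K := J_(i), of size k = n - i + 1, and E the all-ones matrix.  The
   entry bounds and the dominance of J make

     K - ((n-2) l I + l E)   (J dominant)   and   ((n-2) m I + m E) - K   (J balanced)

   diagonally dominant symmetric matrices, hence positive semidefinite by the
   Gershgorin argument.  So K is compared, as a quadratic form, with
   a I + b E, whose eigenvalues are a (k - 1 times) and a + b k; for
   a = (n-2) c and b = c this is (2n-i-1) c.
   Instead of the Courant-Fischer theorem we use the spectral theorem and test
   the form inequalities on explicit vectors of an eigenbasis:
   - q_K >= a q_I + b q_E: eigenvectors give lambda >= a, the all-ones vector
     gives lambda_max >= a + b k;
   - q_K <= a q_I + b q_E: eigenvectors and Cauchy-Schwarz give lambda <= a + b k,
     and a combination of two eigenvectors orthogonal to the all-ones vector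
     shows that at most one eigenvalue exceeds a.
   The spectral theorem of MathComp lives over an algebraically closed
   numeric field, so real matrices are embedded into R[i]. *)

(* The diagonal entry bounds the off-diagonal absolute row sum: diagonal
   dominance together with a nonnegative diagonal. *)
Definition dominant (R : numDomainType) k (Q : 'M[R]_k) : Prop :=
  forall p, \sum_(q | q != p) `|Q p q| <= Q p p.

Section QuadraticForm.
Variable C : numClosedFieldType.

Definition qform k (M : 'M[C]_k) (x : 'rV[C]_k) : C := (x *m M *m x^t*) 0 0.

Lemma qformE k M x : @qform k M x = \sum_a \sum_b x 0 a * M a b * (x 0 b)^*.
Proof.
rewrite /qform mxE exchange_big /=; apply: eq_bigr => b _.
by rewrite !mxE mulr_suml.
Qed.

Lemma qformD k M N x : @qform k (M + N) x = qform M x + qform N x.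
Proof. by rewrite /qform mulmxDr mulmxDl mxE. Qed.

Lemma qformB k M N x : @qform k (M - N) x = qform M x - qform N x.
Proof. by rewrite /qform mulmxBr mulmxBl !mxE. Qed.

Lemma qformZ k a M x : @qform k (a *: M) x = a * qform M x.
Proof. by rewrite /qform -scalemxAr -scalemxAl mxE. Qed.

Lemma qform_diag k d x : @qform k (diag_mx d) x = \sum_a d 0 a * `|x 0 a| ^+ 2.
Proof.
rewrite /qform mul_mx_diag mxE; apply: eq_bigr => a _.
by rewrite !mxE normCK mulrA [x 0 a * _]mulrC.
Qed.

Lemma qform1 k x : @qform k 1%:M x = \sum_a `|x 0 a| ^+ 2.
Proof.
have -> : 1%:M = diag_mx (const_mx 1 : 'rV[C]_k).
  by apply/matrixP => a b; rewrite !mxE.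
by rewrite qform_diag; apply: eq_bigr => a _; rewrite mxE mul1r.
Qed.

Lemma qform_ones k x : @qform k (const_mx 1) x = `|\sum_a x 0 a| ^+ 2.
Proof.
rewrite qformE normCK rmorph_sum mulr_suml; apply: eq_bigr => a _.
by rewrite mulr_sumr; apply: eq_bigr => b _; rewrite mxE mulr1.
Qed.

Lemma qform1_unitary k (P : 'M[C]_k) x :
  P^t* *m P = 1%:M -> qform 1%:M (x *m P^t*) = qform 1%:M x.
Proof.
move=> PP; rewrite /qform trmx_mul map_mxM trmxCK !mulmx1.
by rewrite mulmxA -(mulmxA x) PP mulmx1.
Qed.

(* The 2x2 building block of the Gershgorin argument: for real q,
   |q| (|u|^2 + |v|^2) + 2 q Re (u v^* ) is |q| |u +- v|^2. *)
Lemma pair_term_ge0 (q u v : C) : q \is Num.real ->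
  0 <= `|q| * (`|u| ^+ 2 + `|v| ^+ 2) + q * (u * v^* + v * u^* ).
Proof.
move=> qr; have [q0|q0] := boolP (0 <= q).
  have -> : `|q| * (`|u| ^+ 2 + `|v| ^+ 2) + q * (u * v^* + v * u^* )
            = q * `|u + v| ^+ 2 by rewrite ger0_norm // !normCK rmorphD; ring.
  by rewrite mulr_ge0 // exprn_ge0.
have {q0} q0 : q < 0 by rewrite real_ltNge // real0.
have -> : `|q| * (`|u| ^+ 2 + `|v| ^+ 2) + q * (u * v^* + v * u^* )
          = - q * `|u - v| ^+ 2 by rewrite ltr0_norm // !normCK rmorphB; ring.
by rewrite mulr_ge0 ?exprn_ge0 // oppr_ge0 ltW.
Qed.

(* Every real symmetric matrix O satisfies
   - q_O(x) <= sum_a (sum_b |O_ab|) |x_a|^2, by summing the 2x2 blocks. *)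
Lemma qform_offdiag_ge k (O : 'M[C]_k) (x : 'rV[C]_k) :
  (forall a b, O a b \is Num.real) -> (forall a b, O a b = O b a) ->
  - \sum_a (\sum_b `|O a b|) * `|x 0 a| ^+ 2 <= qform O x.
Proof.
move=> Or Os; set u := fun a => `|x 0 a| ^+ 2.
pose T a b := `|O a b| * (u a + u b) + O a b * (x 0 a * (x 0 b)^* + x 0 b * (x 0 a)^* ).
have T_ge0 : 0 <= \sum_a \sum_b T a b.
  by apply: sumr_ge0 => a _; apply: sumr_ge0 => b _; apply: pair_term_ge0.
have sum_absl : \sum_a \sum_b `|O a b| * u a = \sum_a (\sum_b `|O a b|) * u a.
  by apply: eq_bigr => a _; rewrite mulr_suml.
have sum_absr : \sum_a \sum_b `|O a b| * u b = \sum_a (\sum_b `|O a b|) * u a.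
  rewrite exchange_big /=; apply: eq_bigr => a _; rewrite mulr_suml.
  by apply: eq_bigr => b _; rewrite Os.
have sum_forml : \sum_a \sum_b O a b * (x 0 a * (x 0 b)^* ) = qform O x.
  by rewrite qformE; apply: eq_bigr => a _; apply: eq_bigr => b _; ring.
have sum_formr : \sum_a \sum_b O a b * (x 0 b * (x 0 a)^* ) = qform O x.
  rewrite qformE exchange_big /=; apply: eq_bigr => a _; apply: eq_bigr => b _.
  by rewrite Os; ring.
have sumT : \sum_a \sum_b T a b
            = 2 * (\sum_a (\sum_b `|O a b|) * u a) + 2 * qform O x.
  rewrite !mulr_natl !mulr2n -{1}sum_absl -sum_absr -{1}sum_forml -sum_formr.
  rewrite -!big_split /=; apply: eq_bigr => a _.
  rewrite -!big_split /=; apply: eq_bigr => b _; rewrite /T; ring.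
move: T_ge0; rewrite sumT -mulrDr pmulr_rge0 // => T_ge0.
by rewrite -subr_ge0 opprK addrC.
Qed.

Lemma dominant_psd k (Q : 'M[C]_k) (x : 'rV[C]_k) :
  (forall a b, Q a b \is Num.real) -> (forall a b, Q a b = Q b a) ->
  dominant Q -> 0 <= qform Q x.
Proof.
move=> Qr Qs Qdom.
pose O : 'M[C]_k := \matrix_(a, b) if a == b then 0 else Q a b.
have QE : Q = O + diag_mx (\row_a Q a a).
  apply/matrixP => a b; rewrite !mxE; case: eqP => [->|]; first by rewrite add0r.
  by rewrite addr0.
have O_row a : \sum_b `|O a b| = \sum_(b | b != a) `|Q a b|.
  rewrite [RHS]big_mkcond; apply: eq_bigr => b _; rewrite mxE eq_sym.
  by case: eqP; rewrite ?normr0.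
have Or a b : O a b \is Num.real.
  by rewrite mxE; case: eqP; rewrite ?real0.
have Os a b : O a b = O b a by rewrite !mxE eq_sym Qs.
rewrite QE qformD qform_diag.
apply: le_trans (lerD (qform_offdiag_ge x Or Os) (lexx _)).
rewrite -sumrN -big_split /=; apply: sumr_ge0 => a _.
by rewrite mxE -mulNr -mulrDl mulr_ge0 ?exprn_ge0 // addrC subr_ge0 O_row.
Qed.

(* Cauchy-Schwarz: |x_1 + ... + x_k|^2 <= k (|x_1|^2 + ... + |x_k|^2),
   i.e. k I - E is dominant. *)
Lemma qform_ones_le k (x : 'rV[C]_k) : qform (const_mx 1) x <= k%:R * qform 1%:M x.
Proof.
rewrite -subr_ge0 -qformZ -qformB.
have -> : k%:R *: (1%:M : 'M[C]_k) - const_mx 1 =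
          \matrix_(a, b) (k%:R * (a == b)%:R - 1).
  by apply/matrixP => a b; rewrite !mxE mulr_natr.
apply: dominant_psd => [a b|a b|a].
- by rewrite mxE rpredB ?rpredM ?rpred_nat ?rpred1.
- by rewrite !mxE eq_sym.
rewrite (eq_bigr (fun _ => 1)); last first.
  by move=> b ba; rewrite mxE eq_sym (negPf ba) mulr0 sub0r normrN normr1.
rewrite sumr_const cardC1 card_ord mxE eqxx mulr1.
have k_gt0 : (0 < k)%N by case: a => a /= /(leq_ltn_trans (leq0n a)).
by rewrite -(prednK k_gt0) mulrSr addrK.
Qed.

End QuadraticForm.

Lemma char_poly_unitary_conj (C : numClosedFieldType) k (P Q D : 'M[C]_k) :
  Q *m P = 1%:M -> char_poly (Q *m D *m P) = char_poly D.
Proof.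
move=> QP; rewrite /char_poly.
have QPp : map_mx polyC Q *m map_mx polyC P = 1%:M by rewrite -map_mxM QP map_mx1.
have -> : char_poly_mx (Q *m D *m P) =
          map_mx polyC Q *m char_poly_mx D *m map_mx polyC P.
  rewrite /char_poly_mx mulmxBr mulmxBl !map_mxM.
  by rewrite mul_mx_scalar -scalemxAl QPp scalemx1.
rewrite !det_mulmx mulrC mulrA -det_mulmx (mulmx1C QPp).
by rewrite det1 mul1r.
Qed.

Lemma hermitian_eigenbasis (C : numClosedFieldType) k (A : 'M[C]_k) (s : seq C) :
  A \is hermsymmx -> char_poly A = \prod_(x <- s) ('X - x%:P) ->
  exists (P : 'M[C]_k) (d : 'rV[C]_k),
  [/\ P *m P^t* = 1%:M, perm_eq s [seq d 0 i | i <- enum 'I_k] &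
     forall x, qform A x = \sum_i d 0 i * `|(x *m P^t*) 0 i| ^+ 2].
Proof.
move=> Aherm chA.
have /unitarymxP PP := spectral_unitarymx A.
set P := spectralmx A in PP *; set d := spectral_diag A.
have AE : A = P^t* *m diag_mx d *m P.
  rewrite -invmx_unitary; last exact/unitarymxP.
  exact/orthomx_spectralP/hermitian_normalmx.
exists P, d; split => //.
- apply: prod_XsubC_eq; rewrite -chA {1}AE char_poly_unitary_conj ?(mulmx1C PP) //.
  rewrite char_poly_trig ?diag_mx_is_trig // big_map big_enum /=.
  by apply: eq_bigr => i _; rewrite mxE eqxx mulr1n.
- move=> x; rewrite -qform_diag /qform {1}AE trmx_mul map_mxM trmxCK.
  by rewrite !mulmxA.
Qed.

Section Eigenbasis.
Variables (C : numClosedFieldType) (k : nat) (A P : 'M[C]_k) (d : 'rV[C]_k).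
Hypothesis P_unitary : P *m P^t* = 1%:M.
Hypothesis qformA : forall x, qform A x = \sum_i d 0 i * `|(x *m P^t*) 0 i| ^+ 2.

Let P_unitaryC : P^t* *m P = 1%:M := mulmx1C P_unitary.
Local Notation e i := (delta_mx 0 i : 'rV[C]_k).

Lemma eigenvector_qform i :
  qform A (e i *m P) = d 0 i /\ qform 1%:M (e i *m P) = 1.
Proof.
have coord : e i *m P *m P^t* = e i by rewrite -mulmxA P_unitary mulmx1.
have e_norm t : `|e i 0 t| ^+ 2 = (t == i)%:R.
  by rewrite mxE eqxx; case: eqP; rewrite ?normr1 ?normr0 ?expr1n ?expr0n.
split.
  rewrite qformA coord (bigD1 i) //= big1 => [|t ti].
    by rewrite e_norm eqxx mulr1 addr0.
  by rewrite e_norm (negPf ti) mulr0.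
rewrite -(qform1_unitary _ P_unitaryC) coord qform1 (bigD1 i) //= big1 => [|t ti].
  by rewrite e_norm eqxx addr0.
by rewrite e_norm (negPf ti).
Qed.

Lemma eigenvalue_ge (lo a : C) : 0 <= a ->
  (forall x, lo * qform 1%:M x + a * qform (const_mx 1) x <= qform A x) ->
  forall i, lo <= d 0 i.
Proof.
move=> a_ge0 Hlo i; have [eA e1] := eigenvector_qform i.
have := Hlo (e i *m P); rewrite eA e1 mulr1; apply: le_trans.
by rewrite lerDl mulr_ge0 // qform_ones exprn_ge0.
Qed.

(* q_A <= hi q_I + b q_E with b >= 0 bounds every eigenvalue by hi + b k,
   by Cauchy-Schwarz. *)
Lemma eigenvalue_le (hi b : C) : 0 <= b ->
  (forall x, qform A x <= hi * qform 1%:M x + b * qform (const_mx 1) x) ->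
  forall i, d 0 i <= hi + b * k%:R.
Proof.
move=> b_ge0 Hhi i; have [eA e1] := eigenvector_qform i.
rewrite -eA; apply: le_trans (Hhi _) _; rewrite e1 mulr1 lerD2l ler_wpM2l //.
by have := qform_ones_le (e i *m P); rewrite e1 mulr1.
Qed.

(* Testing with the all-ones vector: some eigenvalue is at least a + b k. *)
Lemma eigenvalue_max_ge (lo a T : C) : (0 < k)%N ->
  (forall x, lo * qform 1%:M x + a * qform (const_mx 1) x <= qform A x) ->
  (forall i, d 0 i <= T) -> lo + a * k%:R <= T.
Proof.
move=> k_gt0 Hlo HT; pose x : 'rV[C]_k := const_mx 1.
have x1 : qform 1%:M x = k%:R.
  rewrite qform1 (eq_bigr (fun _ => 1)) ?sumr_const ?card_ord //.
  by move=> t _; rewrite mxE normr1 expr1n.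
have xE : qform (const_mx 1) x = k%:R * k%:R.
  rewrite qform_ones (eq_bigr (fun _ => 1)) ?sumr_const ?card_ord ?normr_nat ?expr2 //.
  by move=> t _; rewrite mxE.
have xA : qform A x <= T * k%:R.
  rewrite qformA -x1 -(qform1_unitary _ P_unitaryC) qform1 mulr_sumr.
  by apply: ler_sum => t _; rewrite ler_wpM2r ?exprn_ge0.
have := le_trans (Hlo x) xA; rewrite x1 xE mulrA -mulrDl.
by rewrite ler_pM2r // ltr0n.
Qed.

(* Below a I + b E at most one eigenvalue exceeds a: a combination of two
   eigenvectors can be chosen orthogonal to the all-ones vector. *)
Lemma eigenvalue_above_card (hi b : C) :
  (forall x, qform A x <= hi * qform 1%:M x + b * qform (const_mx 1) x) ->
  (#|[pred i | (hi < d 0 i)%R]| <= 1)%N.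
Proof.
move=> Hhi; apply/card_le1_eqP => j i /= hi_j hi_i; apply/eqP; apply: contraT => ij.
pose w t := \sum_a P t a.
pose p : C := if (w j == 0) && (w i == 0) then 1 else w j.
pose q : C := if (w j == 0) && (w i == 0) then 0 else w i.
have pq_orth : p * w i - q * w j = 0.
  rewrite /p /q; case: ifP => [/andP[/eqP -> /eqP ->]|_].
    by rewrite !(mulr0, mul0r, subr0).
  by rewrite mulrC subrr.
have pq_ne0 : (p != 0) || (q != 0).
  rewrite /p /q; case: ifP => [_|/negbT]; first by rewrite oner_eq0.
  by rewrite negb_and.
pose y : 'rV[C]_k := p *: e i - q *: e j.
have y_out t : t != i -> t != j -> y 0 t = 0.
  by move=> ti tj; rewrite !mxE (negPf ti) (negPf tj) !andbF !mulr0 subr0.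
have yi : y 0 i = p by rewrite !mxE !eqxx (negPf ij) !andbT andbF mulr1 mulr0 subr0.
have yj : y 0 j = - q by rewrite !mxE !eqxx eq_sym (negPf ij) !andbT andbF mulr1 mulr0 sub0r.
have sum2 (F : 'I_k -> C) : (forall t, t != i -> t != j -> F t = 0) ->
    \sum_t F t = F i + F j.
  move=> F0; rewrite (bigD1 i) //= (bigD1 j) 1?eq_sym //= big1 ?addr0 //.
  by move=> t /andP[ti tj]; apply: F0.
pose x := y *m P.
have xy : x *m P^t* = y by rewrite -mulmxA P_unitary mulmx1.
have x_orth : \sum_a x 0 a = 0.
  under eq_bigr => a _ do rewrite mxE.
  rewrite exchange_big /= sum2; last by move=> t ti tj; rewrite -mulr_sumr y_out ?mul0r.
  by rewrite -!mulr_sumr yi yj mulNr.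
have := Hhi x; rewrite qform_ones x_orth normr0 expr0n /= mulr0 addr0.
rewrite qformA -(qform1_unitary _ P_unitaryC) xy qform1 mulr_sumr !sum2 => [|t ti tj|t ti tj].
- rewrite yi yj normrN => le_form.
  suff : hi * `|p| ^+ 2 + hi * `|q| ^+ 2 < d 0 i * `|p| ^+ 2 + d 0 j * `|q| ^+ 2.
    by move/lt_geF; rewrite le_form.
  rewrite -subr_gt0.
  have -> : d 0 i * `|p| ^+ 2 + d 0 j * `|q| ^+ 2 - (hi * `|p| ^+ 2 + hi * `|q| ^+ 2)
          = (d 0 i - hi) * `|p| ^+ 2 + (d 0 j - hi) * `|q| ^+ 2 by ring.
  have gap_i : 0 < d 0 i - hi by rewrite subr_gt0.
  have gap_j : 0 < d 0 j - hi by rewrite subr_gt0.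
  case/orP: pq_ne0 => [p0|q0].
    apply: ltr_pwDl; first by rewrite mulr_gt0 // exprn_gt0 // normr_gt0.
    by rewrite mulr_ge0 ?exprn_ge0 // ltW.
  apply: ltr_pwDr; first by rewrite mulr_gt0 // exprn_gt0 // normr_gt0.
  by rewrite mulr_ge0 ?exprn_ge0 // ltW.
- by rewrite y_out // normr0 expr0n mulr0.
- by rewrite y_out // normr0 expr0n mulr0.
Qed.

End Eigenbasis.

(* a I + b E, with E the all-ones matrix: its eigenvalues are a, with
   multiplicity k - 1, and a + b k.  These are the comparison matrices. *)
Definition scal_ones (F : pzRingType) {k : nat} (a b : F) : 'M[F]_k :=
  a *: 1%:M + b *: const_mx 1.

Lemma qform_scal_ones (C : numClosedFieldType) k (a b : C) (x : 'rV[C]_k) :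
  qform (scal_ones a b) x = a * qform 1%:M x + b * qform (const_mx 1) x.
Proof. by rewrite qformD !qformZ. Qed.

Section RealSymmetric.
Variable R : rcfType.
Local Notation toC := (real_complex R).

Lemma map_scal_ones k (a b : R) :
  map_mx toC (scal_ones a b : 'M_k) = scal_ones (toC a) (toC b).
Proof. by rewrite map_mxD !map_mxZ map_mx1 map_const_mx rmorph1. Qed.

Lemma dominant_map k (Q : 'M[R]_k) : dominant Q -> dominant (map_mx toC Q).
Proof.
move=> Qdom p; rewrite mxE.
under eq_bigr => q _ do rewrite mxE normc_def /= expr0n addr0 sqrtr_sqr.
by rewrite -rmorph_sum lecR.
Qed.

Lemma real_dominant_psd k (Q : 'M[R]_k) x : Q^T = Q -> dominant Q ->
  0 <= qform (map_mx toC Q) x.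
Proof.
move=> /matrixP Qsym Qdom; apply: dominant_psd; last exact: dominant_map.
- by move=> p q; rewrite mxE; apply/complex_realP; exists (Q p q).
- by move=> p q; rewrite !mxE -[in LHS]Qsym mxE.
Qed.

Lemma dominant_qform_lower k (K : 'M[R]_k) (a b : R) x : K^T = K ->
  dominant (K - scal_ones a b) ->
  toC a * qform 1%:M x + toC b * qform (const_mx 1) x <= qform (map_mx toC K) x.
Proof.
move=> Ksym Kdom; have := real_dominant_psd x _ Kdom.
rewrite map_mxB map_scal_ones qformB qform_scal_ones subr_ge0; apply.
by rewrite linearB /= Ksym /scal_ones linearD /= !linearZ /= trmx1 trmx_const.
Qed.

Lemma dominant_qform_upper k (K : 'M[R]_k) (a b : R) x : K^T = K ->
  dominant (scal_ones a b - K) ->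
  qform (map_mx toC K) x <= toC a * qform 1%:M x + toC b * qform (const_mx 1) x.
Proof.
move=> Ksym Kdom; have := real_dominant_psd x _ Kdom.
rewrite map_mxB map_scal_ones qformB qform_scal_ones subr_ge0; apply.
by rewrite linearB /= Ksym /scal_ones linearD /= !linearZ /= trmx1 trmx_const.
Qed.

End RealSymmetric.

Section SortedSeq.
Variable R : realDomainType.

Lemma sorted_le_last (s : seq R) y : sorted <=%R s -> y \in s -> y <= s`_(size s).-1.
Proof.
move=> s_sorted ys; rewrite -(nth_index 0 ys).
have ilt : (index y s < size s)%N by rewrite index_mem.
apply: (sorted_leq_nth le_trans lexx 0 s_sorted); rewrite ?inE //.
- by rewrite prednK // (leq_ltn_trans (leq0n _) ilt).
- by rewrite -ltnS prednK // (leq_ltn_trans (leq0n _) ilt).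
Qed.

Lemma sorted_count_above (s : seq R) (c : R) j : sorted <=%R s ->
  (j < size s)%N -> c < s`_j -> (size s - j <= count (fun y => (c < y)%R) s)%N.
Proof.
move=> s_sorted js c_lt.
have all_above : all (fun y => c < y) (drop j s).
  apply/(all_nthP 0) => t; rewrite size_drop => t_lt; rewrite nth_drop.
  apply: lt_le_trans c_lt _.
  apply: (sorted_leq_nth le_trans lexx 0 s_sorted); rewrite ?inE ?leq_addr //.
  by rewrite -ltn_subRL.
rewrite -[in leqRHS](cat_take_drop j s) count_cat.
by move: all_above; rewrite all_count => /eqP ->; rewrite size_drop leq_addl.
Qed.

End SortedSeq.

Section RealEigenvalues.
Variable R : rcfType.
Local Notation toC := (real_complex R).

Lemma size_eigenvalues k (K : 'M[R]_k) s : sorted_eigenvalues K s -> size s = k.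
Proof.
by move=> [_ chK]; have := size_char_poly K; rewrite chK size_prod_XsubC => -[].
Qed.

Lemma real_eigenbasis k (K : 'M[R]_k) s : K^T = K -> sorted_eigenvalues K s ->
  exists (P : 'M[R[i]]_k) (d : 'rV[R[i]]_k),
  [/\ P *m P^t* = 1%:M, perm_eq (map toC s) [seq d 0 i | i <- enum 'I_k] &
     forall x, qform (map_mx toC K) x = \sum_i d 0 i * `|(x *m P^t*) 0 i| ^+ 2].
Proof.
move=> /matrixP Ksym [_ chK]; apply: hermitian_eigenbasis.
  apply/is_hermitianmxP; rewrite expr0 scale1r; apply/matrixP => p q.
  rewrite !mxE conj_Creal -?[in RHS]Ksym ?mxE //.
  by apply/complex_realP; exists (K q p).
rewrite -map_char_poly chK rmorph_prod big_map.
by apply: eq_bigr => y _; exact: map_polyXsubC.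
Qed.

Lemma eigenvalues_lower k (K : 'M[R]_k) s (lo a : R) : K^T = K ->
  sorted_eigenvalues K s -> 0 <= a -> dominant (K - scal_ones lo a) ->
  (forall y, y \in s -> lo <= y) /\ ((0 < k)%N -> lo + a * k%:R <= s`_k.-1).
Proof.
move=> Ksym Ks a_ge0 Kdom.
have [P [d [PP s_d qformK]]] := real_eigenbasis Ksym Ks.
have Hlo x := dominant_qform_lower x Ksym Kdom.
have sz := size_eigenvalues Ks.
split=> [y ys|k_gt0].
  have : toC y \in [seq d 0 i | i <- enum 'I_k] by rewrite -(perm_mem s_d) map_f.
  case/mapP => i _ di; rewrite -lecR di.
  by apply: (eigenvalue_ge PP qformK _ Hlo); rewrite ler0c.
rewrite -lecR rmorphD rmorphM rmorph_nat /=.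
apply: (eigenvalue_max_ge PP qformK k_gt0 Hlo) => i.
have : d 0 i \in map toC s by rewrite (perm_mem s_d) map_f ?mem_enum.
case/mapP => y ys ->; rewrite lecR -sz.
exact: sorted_le_last (proj1 Ks) ys.
Qed.

Lemma eigenvalues_upper k (K : 'M[R]_k) s (hi b : R) : K^T = K ->
  sorted_eigenvalues K s -> 0 <= b -> dominant (scal_ones hi b - K) ->
  (forall y, y \in s -> y <= hi + b * k%:R) /\ (forall j, (j.+1 < k)%N -> s`_j <= hi).
Proof.
move=> Ksym Ks b_ge0 Kdom.
have [P [d [PP s_d qformK]]] := real_eigenbasis Ksym Ks.
have Hhi x := dominant_qform_upper x Ksym Kdom.
have sz := size_eigenvalues Ks.
split=> [y ys|j jk].
  have : toC y \in [seq d 0 i | i <- enum 'I_k] by rewrite -(perm_mem s_d) map_f.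
  case/mapP => i _ di; rewrite -lecR di rmorphD rmorphM rmorph_nat /=.
  by apply: (eigenvalue_le PP qformK _ Hhi); rewrite ler0c.
rewrite leNgt; apply/negP => hi_lt.
have := sorted_count_above (proj1 Ks) _ hi_lt; rewrite sz => /(_ (ltnW jk)).
have -> : count (fun y => hi < y) s = #|[pred i | toC hi < d 0 i]|.
  rewrite cardE /enum_mem -enumT size_filter -(count_map _ (fun i => toC hi < i)).
  rewrite -(permP s_d) count_map; apply: eq_count => y /=.
  by rewrite ltcR.
move=> /leq_trans/(_ (eigenvalue_above_card PP qformK Hhi)); lia.
Qed.

End RealEigenvalues.

Local Close Scope sesquilinear_scope.

Lemma shift_ord_inj n k0 : injective (@shift_ord n k0).
Proof. by move=> x y /(congr1 val) /= /eqP; rewrite eqn_add2l => /eqP /val_inj. Qed.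

Lemma sum_inj_le (R : numDomainType) m n (h : 'I_m -> 'I_n) (F : 'I_n -> R) :
  injective h -> (forall j, 0 <= F j) -> \sum_b F (h b) <= \sum_j F j.
Proof.
move=> h_inj F_ge0.
have -> : \sum_b F (h b) = \sum_(j in h @: [set: 'I_m]) F j.
  by rewrite big_imset /=; [apply: eq_bigl => b; rewrite in_setT | exact: in2W].
by rewrite [leRHS](bigID (mem (h @: [set: 'I_m]))) /= lerDl sumr_ge0.
Qed.

Lemma lr_sub_row_le (R : numDomainType) n k0 (f : 'I_n -> R) (p : 'I_(n - k0)) :
  (forall j, j != shift_ord p -> 0 <= f j) ->
  \sum_(q | q != p) f (shift_ord q) <= \sum_(j | j != shift_ord p) f j.
Proof.
move=> f_ge0; rewrite big_mkcond [leRHS]big_mkcond /=.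
pose F j := if j != @shift_ord n k0 p then f j else 0.
rewrite (eq_bigr (fun q => F (shift_ord q))) => [|q _]; last first.
  by rewrite /F (inj_eq (@shift_ord_inj n k0)).
apply: sum_inj_le; first exact: shift_ord_inj.
by move=> j; rewrite /F; case: ifP => // /f_ge0.
Qed.

Lemma lr_sub_tr (R : Type) n k0 (J : 'M[R]_n) : J^T = J -> (lr_sub k0 J)^T = lr_sub k0 J.
Proof. by move=> /matrixP Jsym; apply/matrixP => p q; rewrite !mxE -[in LHS]Jsym mxE. Qed.

Section ComparisonMatrices.
Variables (R : realFieldType) (n k0 : nat) (J : 'M[R]_n).
Hypotheses (n_ge3 : (3 <= n)%N) (J_diag : forall i, 0 <= J i i).
Local Notation K := (lr_sub k0 J).

Lemma off_shift (p q : 'I_(n - k0)) : q != p -> shift_ord q != shift_ord p.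
Proof. by rewrite (inj_eq (@shift_ord_inj n k0)). Qed.

Lemma sum_const_offdiag (c : R) (r : 'I_n) : \sum_(j | j != r) c = (n - 2)%:R * c + c.
Proof.
rewrite sumr_const cardC1 card_ord.
have -> : n.-1 = (n - 2).+1 by lia.
by rewrite mulrSr mulr_natl.
Qed.

(* Dominant case: J_(k0) - ((n - 2) l I + l E) is dominant, since each of its
   off-diagonal row sums loses (n - 1) l against the dominant row of J. *)
Lemma dominant_lower (l : R) : 0 < l -> diag_dominant J ->
  (forall i j, i != j -> l <= J i j) ->
  dominant (K - scal_ones ((n - 2)%:R * l) l).
Proof.
move=> l_gt0 Jdom J_off p; set r := shift_ord p.
have J_row : \sum_(j | j != r) J r j <= J r r.
  have := Jdom r; rewrite /Delta subr_ge0 ger0_norm //; apply: le_trans.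
  by apply: ler_sum => j jr; rewrite ger0_norm // (le_trans (ltW l_gt0)) // J_off // eq_sym.
rewrite !mxE eqxx !mulr1 -/r.
under eq_bigr => q qp.
  rewrite !mxE eq_sym (negPf qp) mulr0 add0r mulr1 ger0_norm; last first.
    by rewrite subr_ge0 J_off // eq_sym off_shift.
  over.
apply: le_trans (lr_sub_row_le (f := fun j => J r j - l) _) _ => /=.
  by move=> j jr; rewrite subr_ge0 J_off // eq_sym.
rewrite sumrB sum_const_offdiag; lra.
Qed.

(* Balanced case: ((n - 2) m I + m E) - J_(k0) is dominant, since the row
   sums of J equal its diagonal. *)
Lemma dominant_upper (m : R) : diag_balanced J ->
  (forall i j, i != j -> 0 <= J i j <= m) ->
  dominant (scal_ones ((n - 2)%:R * m) m - K).
Proof.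
move=> Jbal J_off p; set r := shift_ord p.
have J_ge0 i j : i != j -> 0 <= J i j by move/J_off/andP => [].
have J_le i j : i != j -> J i j <= m by move/J_off/andP => [].
have J_row : \sum_(j | j != r) J r j = J r r.
  have := Jbal r; rewrite /Delta ger0_norm // => /eqP; rewrite subr_eq0 => /eqP ->.
  by apply: eq_bigr => j jr; rewrite ger0_norm // J_ge0 // eq_sym.
rewrite !mxE eqxx !mulr1 -/r.
under eq_bigr => q qp.
  rewrite !mxE eq_sym (negPf qp) mulr0 add0r mulr1 ger0_norm; last first.
    by rewrite subr_ge0 J_le // eq_sym off_shift.
  over.
apply: le_trans (lr_sub_row_le (f := fun j => m - J r j) _) _ => /=.
  by move=> j jr; rewrite subr_ge0 J_le // eq_sym.
rewrite sumrB sum_const_offdiag J_row; lra.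
Qed.

End ComparisonMatrices.

Section SubmatrixBounds.
Variables (R : rcfType) (n : nat) (J : 'M[R]_n).
Hypotheses (n_ge3 : (3 <= n)%N) (J_sym : J^T = J) (J_diag : forall i, 0 <= J i i).

(* J_(i) has size n - i + 1, so the top comparison eigenvalue
   (n - 2) c + c (n - i + 1) equals (2 n - i - 1) c. *)
Lemma top_coeff (c : R) i : (1 <= i <= n)%N ->
  (n - 2)%:R * c + c * (n - i.-1)%:R = (2 * n - i - 1)%:R * c.
Proof.
by move=> /andP[i_ge1 i_le]; rewrite [c * _]mulrC -mulrDl -natrD; congr (_%:R * c); lia.
Qed.

Lemma eigenvalue_lower_bounds (l : R) : 0 < l -> diag_dominant J ->
  (forall i j, i != j -> l <= J i j) ->
  forall i, (1 <= i <= n)%N -> forall s, sorted_eigenvalues (lr_sub i.-1 J) s ->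
    (forall j, (1 <= j <= n - i)%N -> (n - 2)%:R * l <= s`_j.-1) /\
    (2 * n - i - 1)%:R * l <= s`_(n - i).
Proof.
move=> l_gt0 Jdom J_off i i_range s Ks.
have [s_ge s_top] := eigenvalues_lower (lr_sub_tr i.-1 J_sym) Ks (ltW l_gt0)
  (dominant_lower (k0 := i.-1) n_ge3 J_diag l_gt0 Jdom J_off).
have sz := size_eigenvalues Ks.
split=> [j j_range|]; first by apply/s_ge/mem_nth; rewrite sz; lia.
rewrite -top_coeff //; have -> : (n - i = (n - i.-1).-1)%N by lia.
by apply: s_top; lia.
Qed.

Lemma eigenvalue_upper_bounds (m : R) : 0 <= m -> diag_balanced J ->
  (forall i j, i != j -> 0 <= J i j <= m) ->
  forall i, (1 <= i <= n)%N -> forall s, sorted_eigenvalues (lr_sub i.-1 J) s ->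
    (forall j, (1 <= j <= n - i)%N -> s`_j.-1 <= (n - 2)%:R * m) /\
    s`_(n - i) <= (2 * n - i - 1)%:R * m.
Proof.
move=> m_ge0 Jbal J_off i i_range s Ks.
have [s_le s_low] := eigenvalues_upper (lr_sub_tr i.-1 J_sym) Ks m_ge0
  (dominant_upper (k0 := i.-1) n_ge3 J_diag Jbal J_off).
have sz := size_eigenvalues Ks.
split=> [j j_range|]; first by apply: s_low; lia.
by rewrite -top_coeff //; apply/s_le/mem_nth; rewrite sz; lia.
Qed.

End SubmatrixBounds.

Theorem lemma7p2 (R : rcfType) (n : nat) (l m : R) :
  (3 <= n)%N -> 0 < l -> l <= m ->
  (forall J : 'M[R]_n,
     J^T = J -> diag_balanced J -> (forall i, 0 <= J i i) ->
     (forall i j : 'I_n, i != j -> l <= J i j <= m) ->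
     forall i : nat, (1 <= i <= n)%N ->
     forall s : seq R, sorted_eigenvalues (lr_sub i.-1 J) s ->
       (forall j : nat, (1 <= j <= n - i)%N ->
          (n - 2)%:R * l <= s`_j.-1 <= (n - 2)%:R * m) /\
       (2 * n - i - 1)%:R * l <= s`_(n - i) <= (2 * n - i - 1)%:R * m) /\
  (forall J : 'M[R]_n,
     J^T = J -> diag_dominant J -> (forall i, 0 <= J i i) ->
     (forall i j : 'I_n, i != j -> l <= J i j <= m) ->
     forall i : nat, (1 <= i <= n)%N ->
     forall s : seq R, sorted_eigenvalues (lr_sub i.-1 J) s ->
       (forall j : nat, (1 <= j <= n - i)%N -> (n - 2)%:R * l <= s`_j.-1) /\
       (2 * n - i - 1)%:R * l <= s`_(n - i)).
Proof.
move=> n_ge3 l_gt0 l_le_m.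
have J_ge_l (J : 'M[R]_n) : (forall i j, i != j -> l <= J i j <= m) ->
    forall i j, i != j -> l <= J i j.
  by move=> J_off i j /J_off /andP[].
split=> [J J_sym Jbal J_diag J_off i i_range s Ks|J J_sym Jdom J_diag J_off].
  have Jdom : diag_dominant J by move=> r; rewrite Jbal.
  have J_in p q : p != q -> 0 <= J p q <= m.
    by move/J_off/andP => [l_le ->]; rewrite (le_trans (ltW l_gt0)).
  have [lo_all lo_top] := eigenvalue_lower_bounds n_ge3 J_sym J_diag l_gt0 Jdom
    (J_ge_l J J_off) i_range Ks.
  have [hi_all hi_top] := eigenvalue_upper_bounds n_ge3 J_sym J_diag
    (le_trans (ltW l_gt0) l_le_m) Jbal J_in i_range Ks.
  by split=> [j j_range|]; rewrite ?lo_all ?hi_all ?lo_top ?hi_top.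
by apply: eigenvalue_lower_bounds => //; apply: J_ge_l.
Qed.
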